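(* A finitely generated group $G$ admits a regular-preimage left-order if and only if $G$ is trivial.
   Context: A finite generating set of $G$ is a finite set $X$ with a surjective monoid homomorphism $\pi\colon X^*\to G$. For a class $\mathcal{C}$ of languages, a left-order $\prec$ on $G$ with positive cone $P=\{g:1\prec g\}$ is a $\mathcal{C}$-preimage left-order if, for a finite generating set $(X,\pi)$ of $G$, the full preimage $\pi^{-1}(P)\subseteq X^*$ belongs to $\mathcal{C}$. Regular-preimage means $\mathcal{C}$ is the class of languages accepted by finite state automata. *)

From mathcomp Require Import all_boot.
Set Implicit Arguments. Unset Strict Implicit. Unset Printing Implicit Defensive.

Record group := Group {
  gcar :> Type;
  gmul : gcar -> gcar -> gcar;
  gone : gcar;
  ginv : gcar -> gcar;
  gmulA : forall x y z, gmul x (gmul y z) = gmul (gmul x y) z;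
  gmul1g : forall x, gmul gone x = x;
  gmulVg : forall x, gmul (ginv x) x = gone
}.

Definition is_monoid_hom (G : group) (X : Type) (pi : seq X -> G) : Prop :=
  pi [::] = gone G /\ forall u v : seq X, pi (u ++ v) = gmul (pi u) (pi v).

Definition finite_generating_set (G : group) (X : finType) (pi : seq X -> G) : Prop :=
  is_monoid_hom pi /\ forall g : G, exists w : seq X, pi w = g.

Definition finitely_generated (G : group) : Prop :=
  exists (X : finType) (pi : seq X -> G), finite_generating_set pi.

Record dfa (X : finType) := DFA {
  dstate : finType;
  dstart : dstate;
  dtrans : dstate -> X -> dstate;
  dfinal : pred dstate
}.

Definition dfa_accepts (X : finType) (A : dfa X) (w : seq X) : bool :=
  @dfinal X A (foldl (@dtrans X A) (@dstart X A) w).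

Definition regular_language (X : finType) (L : seq X -> Prop) : Prop :=
  exists A : dfa X, forall w, L w <-> dfa_accepts A w.

Definition left_order (G : group) (lt : G -> G -> Prop) : Prop :=
  [/\ (forall x, ~ lt x x),
      (forall x y z, lt x y -> lt y z -> lt x z),
      (forall x y, x <> y -> lt x y \/ lt y x) &
      (forall g x y, lt x y -> lt (gmul g x) (gmul g y))].

Definition positive_cone (G : group) (lt : G -> G -> Prop) : G -> Prop :=
  fun g => lt (gone G) g.

Definition regular_preimage_left_order (G : group) (lt : G -> G -> Prop) : Prop :=
  left_order lt /\
  exists (X : finType) (pi : seq X -> G),
    finite_generating_set pi /\
    regular_language (fun w => positive_cone lt (pi w)).

(* If 1 < h, the word v^a u^b (u a word for h, v a word for h^-1) evaluates
   to h^(b - a); it is positive when a < b and trivial when a = b.  An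
   automaton reading v^0, v^1, ..., v^N with N states must revisit a state
   after v^a1 and v^a2 with a1 < a2, and then accepts v^a1 u^a2 exactly when
   it accepts v^a2 u^a2, which is absurd.  Hence a group with a
   regular-preimage left-order has no positive element, so it is trivial. *)

From Stdlib Require Import Classical.
From mathcomp Require Import all_boot.
Set Implicit Arguments.
Unset Strict Implicit.
Unset Printing Implicit Defensive.

Section GroupPowers.
Variable G : group.

Lemma gmulgV (x : G) : gmul x (ginv x) = gone G.
Proof.
rewrite -{1}(gmul1g (gmul x (ginv x))) -{1}(gmulVg (ginv x)) -gmulA.
by rewrite (gmulA (ginv x) x) gmulVg gmul1g gmulVg.
Qed.

Lemma gmulg1 (x : G) : gmul x (gone G) = x.
Proof. by rewrite -(gmulVg x) gmulA gmulgV gmul1g. Qed.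

Definition gexp (x : G) (n : nat) : G := iter n (gmul x) (gone G).

Lemma gexpD (x : G) m n : gexp x (m + n) = gmul (gexp x m) (gexp x n).
Proof. by elim: m => [|m IHm] /=; rewrite ?gmul1g // IHm gmulA. Qed.

Lemma gexpSr (x : G) n : gexp x n.+1 = gmul (gexp x n) x.
Proof. by rewrite -addn1 gexpD /= gmulg1. Qed.

Lemma gexpVg (x : G) n : gmul (gexp (ginv x) n) (gexp x n) = gone G.
Proof.
elim: n => [|n IHn]; first exact: gmul1g.
rewrite [gexp x _]gexpSr /= -gmulA (gmulA (gexp _ n)) IHn gmul1g.
exact: gmulVg.
Qed.

Lemma hom_flatten_nseq (X : Type) (pi : seq X -> G) (w : seq X) n :
  is_monoid_hom pi -> pi (flatten (nseq n w)) = gexp (pi w) n.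
Proof. by move=> [pi0 piD]; elim: n => [|n IHn] //=; rewrite piD IHn. Qed.

End GroupPowers.

Section LeftOrder.
Variables (G : group) (lt : G -> G -> Prop).
Hypothesis lt_order : left_order lt.

Let pos := positive_cone lt.

Lemma pos_mul (x y : G) : pos x -> pos y -> pos (gmul x y).
Proof.
case: lt_order => _ lt_trans _ lt_mul2l px py.
by apply: lt_trans px _; rewrite -[x in lt x]gmulg1; apply: lt_mul2l.
Qed.

Lemma pos_gexp (x : G) n : pos x -> pos (gexp x n.+1).
Proof.
move=> px; elim: n => [|n IHn]; first by rewrite /= gmulg1.
by rewrite gexpSr; apply: pos_mul.
Qed.

Lemma pos_or_posV (g : G) : g <> gone G -> pos g \/ pos (ginv g).
Proof.
case: lt_order => _ _ lt_total lt_mul2l /lt_total [g_lt1 | ]; last by left.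
by right; have := lt_mul2l (ginv g) _ _ g_lt1; rewrite gmulVg gmulg1.
Qed.

Lemma trivial_of_no_pos : (forall g : G, ~ pos g) -> forall g : G, g = gone G.
Proof. by move=> no_pos g; apply: NNPP => /pos_or_posV [] /no_pos. Qed.

End LeftOrder.

Lemma pigeonhole_nat (T : finType) (f : nat -> T) :
  exists i j, i < j /\ f i = f j.
Proof.
pose g (i : 'I_#|T|.+1) := f i.
have /injectivePn [i [j neq_ij eq_gij]] : ~~ injectiveb g.
  by apply/injectiveP => /leq_card; rewrite card_ord ltnn.
case: (ltngtP i j) => [lt_ij | lt_ji | /val_inj eq_ij].
- by exists i, j.
- by exists j, i.
- by rewrite eq_ij eqxx in neq_ij.
Qed.

Lemma regular_language_collision (X : finType) (L : seq X -> Prop)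
    (f : nat -> seq X) :
  regular_language L ->
  exists i j, i < j /\ forall s, L (f i ++ s) <-> L (f j ++ s).
Proof.
move=> [A accA].
have [i [j [lt_ij same_state]]] :=
  pigeonhole_nat (fun i => foldl (@dtrans X A) (@dstart X A) (f i)).
exists i, j; split=> // s.
by rewrite !accA /dfa_accepts !foldl_cat same_state.
Qed.

Lemma regular_positive_cone_no_pos (G : group) (lt : G -> G -> Prop)
    (X : finType) (pi : seq X -> G) :
  left_order lt -> finite_generating_set pi ->
  regular_language (fun w => positive_cone lt (pi w)) ->
  forall h : G, ~ positive_cone lt h.
Proof.
move=> lt_order [pi_hom pi_onto] reg h pos_h.
have [u pi_u] := pi_onto h; have [v pi_v] := pi_onto (ginv h).
have pi_vu a b : pi (flatten (nseq a v) ++ flatten (nseq b u))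
    = gmul (gexp (ginv h) a) (gexp h b).
  by have [_ ->] := pi_hom; rewrite !hom_flatten_nseq // pi_u pi_v.
have [a1 [a2 [lt_a12 same_class]]] :=
  regular_language_collision (fun a => flatten (nseq a v)) reg.
have /same_class : positive_cone lt (pi (flatten (nseq a1 v)
                                        ++ flatten (nseq a2 u))).
  rewrite pi_vu -(subnKC (ltnW lt_a12)) gexpD gmulA gexpVg gmul1g.
  by rewrite -(subnSK lt_a12); apply: pos_gexp.
case: lt_order => lt_irr _ _ _.
by rewrite pi_vu gexpVg; apply: lt_irr.
Qed.

Lemma trivial_group_left_order (G : group) :
  (forall g : G, g = gone G) -> left_order (fun _ _ : G => False).
Proof.
move=> G_trivial; split=> [x [] | x y z [] | x y neq_xy | g x y []].
by case: neq_xy; rewrite (G_trivial x) (G_trivial y).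
Qed.

Lemma regular_language_empty (X : finType) :
  regular_language (fun _ : seq X => False).
Proof. by exists (@DFA X unit tt (fun _ _ => tt) (fun _ => false)). Qed.

Theorem propositionA4 (G : group) :
  finitely_generated G ->
  ((exists lt : G -> G -> Prop, regular_preimage_left_order lt) <->
   (forall g : G, g = gone G)).
Proof.
move=> [X [pi pi_gen]]; split.
- move=> [lt [lt_order [Y [p [p_gen p_reg]]]]].
  apply: (trivial_of_no_pos lt_order).
  exact: regular_positive_cone_no_pos p_reg.
- move=> G_trivial; exists (fun _ _ => False).
  split; first exact: trivial_group_left_order.
  by exists X, pi; split=> //; apply: regular_language_empty.
Qed.
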